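(* Let $\hat V=[n]\cup\{s,t\}$, and let $\hat f$ map an edge-weight vector $w\in\mathbb{R}^{\binom{\hat V}{2}}$ (for which the maximizer is unique) to $$\hat f(w)=\arg\max_{y\in\{-1,1\}^{\hat V},\ y_s=1,\ y_t=-1}\ \sum_{\{i,j\}}w_{\{i,j\}}(1-y_iy_j),$$ the unique maximum $s$-$t$ cut. Let $S=\{\{u,v\}:u\in\{s,t\},v\in[n]\}$. Then $S$ is a dominating set of $\hat f$ with sensitivity $2$: whenever $w'$ differs from $w$ on one pair by at most $1$ in absolute value, there is $a$ supported on $S$ with $\|a\|_1\le2$, depending only on $\hat f(w)$ and $w'-w$, such that $\hat f(w'+a)=\hat f(w)$ (with unique maximizer). *)

From mathcomp Require Import all_boot all_order all_algebra.
From mathcomp Require Import reals.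
Set Implicit Arguments. Unset Strict Implicit. Unset Printing Implicit Defensive.
Import Order.TTheory GRing.Theory Num.Theory.
Local Open Scope ring_scope.

(* Vertex set \hat V = [n] \cup {s,t}: inl i for i in [n], inr true = s, inr false = t. *)
Definition Vhat (n : nat) : finType := ('I_n + bool)%type.
Definition vs {n : nat} : Vhat n := inr true.
Definition vt {n : nat} : Vhat n := inr false.

Definition edge (n : nat) : finType := {e : {set Vhat n} | #|e| == 2%N}.

(* Objective  sum_{{i,j}} w_{ij} (1 - y_i y_j); for e = {i,j}, prod_(v in e) y v = y_i y_j. *)
Definition cutobj {R : realType} {n : nat} (w : edge n -> R) (y : Vhat n -> R) : R :=
  \sum_(e : edge n) w e * (1 - \prod_(v in val e) y v).

Definition feasible {R : realType} {n : nat} (y : Vhat n -> R) : Prop :=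
  (forall v, y v = 1 \/ y v = -1) /\ y vs = 1 /\ y vt = -1.

(* y is the unique maximizer for w, i.e. \hat f(w) is defined and equals y. *)
Definition fhat_is {R : realType} {n : nat} (w : edge n -> R) (y : Vhat n -> R) : Prop :=
  feasible y /\ forall y', feasible y' -> y' <> y -> cutobj w y' < cutobj w y.

Definition inS {n : nat} (e : edge n) : Prop :=
  exists (u : Vhat n) (i : 'I_n), (u = vs \/ u = vt) /\ val e = [set u; inl i].

Definition one_pair_perturb {R : realType} {n : nat} (w w' : edge n -> R) : Prop :=
  exists e0 : edge n, (forall e, e <> e0 -> w' e = w e) /\ `|w' e0 - w e0| <= 1.

(* Let d := w' - w and, for every non-terminal k, let c_k be the total |d| on the pairs containing
   k.  Changing the side of k changes every product y_i y_j with i = k by at most 2, so replacing the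
   optimal cut y by any other feasible y' gains at most 2 sum_{k switched} c_k in the d-part of the
   objective.  Adding weight c_k to the pair joining k to the terminal on the other side of y, an
   edge that y cuts, makes every switch of k cost exactly 2 c_k; hence y stays the unique maximizer.
   Each pair contains at most two non-terminals, so sum_k c_k <= 2 sum_e |d e| <= 2. *)
From mathcomp Require Import all_boot all_order all_algebra.
From mathcomp Require Import reals.
From mathcomp Require Import ring lra.
Set Implicit Arguments. Unset Strict Implicit. Unset Printing Implicit Defensive.
Import Order.TTheory GRing.Theory Num.Theory.
Local Open Scope ring_scope.

Section MaxCutDomination.

Variables (R : realType) (n : nat).
Implicit Types (y : Vhat n -> R) (w u d : edge n -> R) (c : 'I_n -> R).

Lemma cutobj_ext u u' y : u =1 u' -> cutobj u y = cutobj u' y.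
Proof. by move=> eq_u; apply: eq_bigr => e _; rewrite eq_u. Qed.

Lemma cutobjD u u' y : cutobj (fun e => u e + u' e) y = cutobj u y + cutobj u' y.
Proof. by rewrite /cutobj -big_split; apply: eq_bigr => e _; rewrite mulrDl. Qed.

Lemma cutobjB u y y' :
  cutobj u y' - cutobj u y =
  \sum_e u e * (\prod_(v in val e) y v - \prod_(v in val e) y' v).
Proof. by rewrite /cutobj -sumrB; apply: eq_bigr => e _; ring. Qed.

Lemma feasible_prod_norm y (A : {set Vhat n}) : feasible y -> `|\prod_(v in A) y v| = 1.
Proof.
move=> [y_pm1 _]; elim/big_rec: _ => [|v x _ IH]; first by rewrite normr1.
by rewrite normrM IH mulr1; case: (y_pm1 v) => ->; rewrite ?normrN normr1.
Qed.

Lemma feasible_terminal y y' (b : bool) :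
  feasible y -> feasible y' -> y' (inr b) = y (inr b).
Proof.
by case=> _ [ys yt] [_ [ys' yt']]; case: b; [rewrite -/(@vs n) ys ys' | rewrite -/(@vt n) yt yt'].
Qed.

Definition switched y y' (k : 'I_n) : R := (y' (inl k) != y (inl k))%:R.

Lemma prod_feasibleB_le y y' (A : {set Vhat n}) : feasible y -> feasible y' ->
  `|\prod_(v in A) y v - \prod_(v in A) y' v| <= 2 * \sum_(k | inl k \in A) switched y y' k.
Proof.
move=> Fy Fy'.
have switched_ge0 k : 0 <= switched y y' k by rewrite ler0n.
case: (boolP [exists k, (inl k \in A) && (y' (inl k) != y (inl k))]).
  case/existsP=> k /andP[kA yk]; apply: (le_trans (ler_normB _ _)).
  rewrite !feasible_prod_norm // (bigD1 k) //= /switched yk mulrDr mulr1 lerDl.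
  by rewrite mulr_ge0 // sumr_ge0.
move=> /existsPn unswitched.
suff -> : \prod_(v in A) y v = \prod_(v in A) y' v.
  by rewrite subrr normr0 mulr_ge0 // sumr_ge0.
apply: eq_bigr => -[k|b] vA; last by rewrite (feasible_terminal b Fy Fy').
by move: (unswitched k); rewrite vA negbK => /eqP.
Qed.

Definition vertex_load d (k : 'I_n) : R := \sum_(e : edge n | inl k \in val e) `|d e|.

Lemma cutobjB_le_load d y y' : feasible y -> feasible y' ->
  cutobj d y' - cutobj d y <= 2 * \sum_k vertex_load d k * switched y y' k.
Proof.
move=> Fy Fy'; rewrite cutobjB.
apply: (le_trans (y := \sum_e `|d e| * (2 * \sum_(k | inl k \in val e) switched y y' k))).
  apply: ler_sum => e _; apply: (le_trans (ler_norm _)); rewrite normrM.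
  by apply: ler_wpM2l => //; exact: prod_feasibleB_le.
under eq_bigr => e _ do rewrite mulrCA mulr_sumr.
rewrite -mulr_sumr (exchange_big_dep predT) //=.
by under [X in _ <= 2 * X]eq_bigr => k _ do rewrite /vertex_load mulr_suml.
Qed.

Lemma card_inl_le (A : {set Vhat n}) : (#|[pred k : 'I_n | inl k \in A]| <= #|A|)%N.
Proof.
rewrite -cardsE -(card_imset _ (f := @inl _ bool : 'I_n -> Vhat n)); last by move=> ? ? [].
by apply: subset_leq_card; apply/subsetP => v /imsetP[k]; rewrite inE => kA ->.
Qed.

Lemma sum_vertex_load_le d : \sum_k vertex_load d k <= 2 * \sum_e `|d e|.
Proof.
rewrite /vertex_load (exchange_big_dep predT) //= mulr_sumr; apply: ler_sum => e _.
rewrite sumr_const -[X in X <= _]mulr_natr [2 * _]mulrC.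
apply: (ler_wpM2l (normr_ge0 _)); rewrite ler_nat.
by apply: (leq_trans (card_inl_le (val e))); rewrite (eqP (valP e)).
Qed.

Definition opp_terminal y (k : 'I_n) : Vhat n := if y (inl k) == 1 then vt else vs.

Lemma feasible_opp_terminal y k : feasible y -> y (opp_terminal y k) = - y (inl k).
Proof.
move=> [y_pm1 [ys yt]]; rewrite /opp_terminal; case: ifP => [/eqP -> //|].
by case: (y_pm1 (inl k)) => ->; rewrite ?eqxx // opprK.
Qed.

Definition anchor_set y (k : 'I_n) : {set Vhat n} := [set inl k; opp_terminal y k].

Lemma anchor_set_card y k : #|anchor_set y k| == 2.
Proof. by rewrite cards2 /opp_terminal; case: ifP. Qed.

Definition anchor_edge y k : edge n := exist _ (anchor_set y k) (anchor_set_card y k).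

(* The weight c k is put on the pair {k, opp_terminal y k}, which the cut y separates. *)
Definition anchor_weights y c (f : edge n) : R :=
  \sum_k c k * (val f == anchor_set y k)%:R.

Lemma sum_anchor_indicator y k (F : edge n -> R) :
  \sum_f (val f == anchor_set y k)%:R * F f = F (anchor_edge y k).
Proof.
rewrite (bigD1 (anchor_edge y k)) //= eqxx mul1r big1 ?addr0 // => f nf.
suff /negbTE -> : val f != anchor_set y k by rewrite mul0r.
by apply: contra nf => /eqP eq_f; apply/eqP/val_inj.
Qed.

Lemma anchor_weights_support y c f : anchor_weights y c f != 0 -> inS f.
Proof.
case: (pickP (fun k => val f == anchor_set y k)) => [k /eqP f_k | no_k] nz.
  exists (opp_terminal y k), k; split; first by rewrite /opp_terminal; case: ifP; auto.
  by rewrite f_k /anchor_set setUC.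
by move: nz; rewrite /anchor_weights big1 ?eqxx // => k _; rewrite no_k mulr0.
Qed.

Lemma anchor_weights_ge0 y c f : (forall k, 0 <= c k) -> 0 <= anchor_weights y c f.
Proof. by move=> c_ge0; apply: sumr_ge0 => k _; rewrite mulr_ge0 ?ler0n. Qed.

Lemma sum_anchor_weights y c : \sum_f anchor_weights y c f = \sum_k c k.
Proof.
rewrite /anchor_weights exchange_big /=; apply: eq_bigr => k _.
by under eq_bigr do rewrite mulrC; rewrite (sum_anchor_indicator y k (fun=> c k)).
Qed.

Lemma anchor_edge_prodB y y' k : feasible y -> feasible y' ->
  \prod_(v in anchor_set y k) y v - \prod_(v in anchor_set y k) y' v = - 2 * switched y y' k.
Proof.
move=> Fy Fy'.
have k_opp : inl k != opp_terminal y k by rewrite /opp_terminal; case: ifP.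
have y'_opp : y' (opp_terminal y k) = y (opp_terminal y k).
  by rewrite /opp_terminal; case: ifP => _; apply: feasible_terminal.
rewrite /anchor_set !big_setU1 ?inE // !big_set1 y'_opp feasible_opp_terminal // /switched.
case: Fy Fy' => [y_pm1 _] [y'_pm1 _].
have one_eqN1 : (1 == -1 :> R) = false by apply/eqP => ?; lra.
case: (y_pm1 (inl k)) => ->; case: (y'_pm1 (inl k)) => ->;
  by rewrite ?eqxx ?(eq_sym (-1)) ?one_eqN1 /=; ring.
Qed.

Lemma cutobjB_anchor_weights y y' c : feasible y -> feasible y' ->
  cutobj (anchor_weights y c) y' - cutobj (anchor_weights y c) y =
  - 2 * \sum_k c k * switched y y' k.
Proof.
move=> Fy Fy'; rewrite cutobjB.
under eq_bigr => f _ do rewrite /anchor_weights mulr_suml.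
rewrite exchange_big /= mulr_sumr; apply: eq_bigr => k _.
under eq_bigr => f _ do rewrite mulrAC mulrC.
by rewrite sum_anchor_indicator /= anchor_edge_prodB //; ring.
Qed.

Lemma cutobj_load_anchor_le d y y' : feasible y -> feasible y' ->
  cutobj (fun e => d e + anchor_weights y (vertex_load d) e) y' <=
  cutobj (fun e => d e + anchor_weights y (vertex_load d) e) y.
Proof.
move=> Fy Fy'; rewrite !cutobjD -subr_ge0.
have := cutobjB_le_load d Fy Fy'; have := cutobjB_anchor_weights (vertex_load d) Fy Fy'.
lra.
Qed.

Lemma fhat_is_ext w w' y : w =1 w' -> fhat_is w y -> fhat_is w' y.
Proof.
move=> eq_w [Fy y_max]; split=> // y' Fy' y'y.
by rewrite -!(cutobj_ext _ eq_w); exact: y_max.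
Qed.

Lemma fhat_isD w u y : fhat_is w y ->
  (forall y', feasible y' -> cutobj u y' <= cutobj u y) -> fhat_is (fun e => w e + u e) y.
Proof.
move=> [Fy y_max] u_max; split=> // y' Fy' y'y.
by rewrite !cutobjD; apply: ltr_leD; [exact: y_max | exact: u_max].
Qed.

Lemma one_pair_perturb_sum_le w w' :
  one_pair_perturb w w' -> \sum_e `|w' e - w e| <= 1.
Proof.
case=> e0 [w'_w le_e0]; rewrite (bigD1 e0) //= big1 ?addr0 // => e /eqP ne.
by rewrite w'_w // subrr normr0.
Qed.

End MaxCutDomination.

Theorem lemma5p7 (R : realType) (n : nat) :
  exists A : (Vhat n -> R) -> (edge n -> R) -> (edge n -> R),
    forall (w w' : edge n -> R) (y : Vhat n -> R),
      fhat_is w y -> one_pair_perturb w w' ->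
      let a := A y (fun e => w' e - w e) in
      (forall e, a e != 0 -> inS e) /\
      \sum_(e : edge n) `|a e| <= 2 /\
      fhat_is (fun e => w' e + a e) y.
Proof.
exists (fun y d => anchor_weights y (vertex_load d)) => w w' y y_opt perturb a.
set d := fun e => w' e - w e.
have a_ge0 f : 0 <= a f by apply: anchor_weights_ge0 => k; apply: sumr_ge0.
split; first exact: anchor_weights_support.
split.
  under eq_bigr => f _ do rewrite ger0_norm //.
  rewrite sum_anchor_weights; apply: (le_trans (sum_vertex_load_le d)).
  by have := one_pair_perturb_sum_le perturb; rewrite -/d; lra.
apply: (@fhat_is_ext _ _ (fun e => w e + (d e + a e))); first by move=> e; rewrite /d addrA subrKC.
apply: (fhat_isD y_opt) => y' Fy'; exact: cutobj_load_anchor_le (proj1 y_opt) Fy'.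
Qed.
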